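(* Consider the following algorithm. (1) Let $S_L$ be the welfare $W$ of the allocation obtained by ranking ads by the scores $b_i q_i$. (2) Let $S_H = \sum_{j=1}^s n_j b_{(j)} q_{(j)}$ for that same allocation. (3) Compute the allocations obtained by ranking ads by the scores $b_i q_i - \lambda q_i S$ for $S=S_L$ and for $S=S_H$. (4) If these two allocations coincide, output it. (5) Otherwise let $\hat S = \frac12(S_L+S_H)$ and compute the allocation obtained by ranking by scores $b_i q_i - \lambda q_i \hat S$. (6) Let $\phi(\hat S) = \sum_{j=1}^s n_j (b_{(j)} q_{(j)} - \lambda q_{(j)} \hat S)$ for this allocation; if $\phi(\hat S) < \hat S$ set $S_H=\hat S$, otherwise set $S_L=\hat S$. (7) Repeat steps (3)–(6) until the allocations in step (4) coincide, and output the resulting allocation. Then the allocation output by this algorithm is an efficiency-maximizing allocation, i.e., it maximizes $W$ over all allocations.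
   Context: There are $s$ positions with quality scores $n_1 \ge \dots \ge n_s \ge 0$ and a set of advertisers, advertiser $i$ having quality score $q_i \ge 0$ and bid $b_i$. An allocation places distinct advertisers in positions $1,\dots,s$; write $q_{(j)}, b_{(j)}$ for the quality and bid of the ad in position $j$. Fix $\lambda>0$. The (expected social) welfare of an allocation is $W = \frac{\sum_{j=1}^s n_j b_{(j)} q_{(j)}}{1+\lambda\sum_{j=1}^s n_j q_{(j)}}$ (this corresponds to predicted click-through rates $p_j = \nu n_j q_{(j)}/(1+\lambda\sum_\ell n_\ell q_{(\ell)})$ with $\nu=1$). ''Ranking ads by scores $x_i$'' means sorting the advertisers in decreasing order of $x_i$ and placing the $j$-th in position $j$ for $j=1,\dots,s$. *)

From HB Require Import structures.
From mathcomp Require Import all_boot all_order all_algebra.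
Set Implicit Arguments. Unset Strict Implicit. Unset Printing Implicit Defensive.
Import Order.TTheory GRing.Theory Num.Theory.
Local Open Scope ring_scope.

(* Positions are 'I_s; advertisers form a finite type I; an allocation is an
   injective map a : 'I_s -> I (a j = the advertiser in position j). *)
Section Auction.
Variables (R : realFieldType) (I : finType) (s : nat).
Variables (n : 'I_s -> R) (q b : I -> R) (lam : R).

Definition is_alloc (a : {ffun 'I_s -> I}) : Prop := injective a.

(* "a is the allocation obtained by ranking ads by the scores x": a is the
   list of the first s advertisers of some decreasing sort of all advertisers
   (ties broken arbitrarily). *)
Definition ranked_by (x : I -> R) (a : {ffun 'I_s -> I}) : Prop :=
  [/\ injective a,
      (forall j k : 'I_s, (j <= k)%N -> x (a k) <= x (a j)) &
      (forall i, i \notin codom a -> forall j : 'I_s, x i <= x (a j))].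

Definition Nsum (a : {ffun 'I_s -> I}) : R :=
  \sum_(j < s) n j * b (a j) * q (a j).
Definition Dsum (a : {ffun 'I_s -> I}) : R :=
  \sum_(j < s) n j * q (a j).
Definition welfare (a : {ffun 'I_s -> I}) : R := Nsum a / (1 + lam * Dsum a).

Definition score (S : R) (i : I) : R := b i * q i - lam * q i * S.

Definition phi (S : R) (a : {ffun 'I_s -> I}) : R :=
  \sum_(j < s) n j * (b (a j) * q (a j) - lam * q (a j) * S).

(* A terminating run of the algorithm outputs A, after k executions of
   steps (3)-(6) in which the allocations of step (4) differ, and in the
   (k+1)-th execution of step (3) they coincide.  SL t, SH t are the values
   of S_L, S_H at the start of iteration t; AL t, AH t are the allocations
   computed in step (3) of iteration t; AM t the one computed in step (5).
   Every ranking may break ties arbitrarily. *)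
Definition alg_output (A : {ffun 'I_s -> I}) : Prop :=
  exists (k : nat) (A0 : {ffun 'I_s -> I}) (SL SH : nat -> R)
         (AL AH AM : nat -> {ffun 'I_s -> I}),
    [/\ ranked_by (fun i => b i * q i) A0,
        SL 0%N = welfare A0 & SH 0%N = Nsum A0] /\
    (forall t, (t <= k)%N ->
        ranked_by (score (SL t)) (AL t) /\ ranked_by (score (SH t)) (AH t)) /\
    (forall t, (t < k)%N ->
        let Sh := (SL t + SH t) / 2 in
        [/\ AL t <> AH t, ranked_by (score Sh) (AM t) &
            (if phi Sh (AM t) < Sh
             then SL t.+1 = SL t /\ SH t.+1 = Sh
             else SL t.+1 = Sh /\ SH t.+1 = SH t)]) /\
    AL k = AH k /\ A = AL k.

End Auction.

From HB Require Import structures.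
From mathcomp Require Import all_boot all_order all_algebra.
From mathcomp Require Import ring lra.
Set Implicit Arguments. Unset Strict Implicit. Unset Printing Implicit Defensive.
Import Order.TTheory GRing.Theory Num.Theory.
Local Open Scope ring_scope.

(* For a fixed S, an allocation a has welfare at least S iff
   phi S a = Nsum a - lam S Dsum a is at least S, and phi S is a position-weighted
   sum of the scores b q - lam q S, so by the rearrangement inequality it is
   maximised by ranking by these scores.  Hence the bisection keeps the invariant
   "S_L is attained by some allocation, S_H bounds every welfare".  When both
   rankings agree on an allocation A, then phi S A - phi S A' is affine in S and
   nonnegative at S_L and S_H, hence on [S_L, S_H], which contains the welfare S'
   of any A' that beats S_L; phi S' A >= phi S' A' = S' gives welfare A >= S'. *)

Lemma sum_codom (R : realFieldType) (I : finType) (s : nat) (a : 'I_s -> I)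
    (g : I -> R) :
  injective a -> \sum_i g i = \sum_j g (a j) + \sum_(i | i \notin codom a) g i.
Proof.
move=> ia; rewrite (bigID (mem (codom a))) /=; congr (_ + _).
by rewrite -big_uniq /=; [rewrite /codom big_image | apply/injectiveP].
Qed.

(* Exchange argument with threshold c: every gain x i - c of a' is dominated by
   the positive part of x - c, whose total is collected exactly by a on P. *)
Lemma sum_le_threshold (R : realFieldType) (I : finType) (s : nat) (x : I -> R)
    (a a' : 'I_s -> I) (P : pred 'I_s) (c : R) :
  injective a -> injective a' ->
  (forall j, P j -> c <= x (a j)) -> (forall j, ~~ P j -> x (a j) <= c) ->
  (forall i, i \notin codom a -> x i <= c) ->
  \sum_(j | P j) x (a' j) <= \sum_(j | P j) x (a j).
Proof.
move=> ia ia' hin hout hcodom.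
pose y i := Num.max (x i - c) 0.
have y_ge0 i : 0 <= y i by rewrite le_max lexx orbT.
have y_ge i : x i - c <= y i by rewrite le_max lexx.
have y0 i : x i <= c -> y i = 0 by move=> hi; apply: max_r; rewrite subr_le0.
have yP j : P j -> y (a j) = x (a j) - c.
  by move=> Pj; apply: max_l; rewrite subr_ge0 hin.
suff : \sum_(j | P j) (x (a' j) - c) <= \sum_(j | P j) (x (a j) - c).
  by rewrite !sumrB lerD2r.
apply: (le_trans (y := \sum_j y (a' j))).
  rewrite [X in _ <= X](bigID P) /= -[X in X <= _]addr0.
  by apply: lerD; [apply: ler_sum => j _ | apply: sumr_ge0 => j _].
apply: (le_trans (y := \sum_i y i)).
  by rewrite (sum_codom y ia') lerDl; apply: sumr_ge0 => i _.
rewrite (sum_codom y ia) [X in _ + X]big1 => [|i /hcodom/y0 //].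
rewrite addr0 (bigID P) /= [X in _ + X]big1 => [|j /hout/y0 //].
by rewrite addr0 (eq_bigr _ yP).
Qed.

Lemma ranked_prefix_sum_max (R : realFieldType) (I : finType) (s : nat)
    (x : I -> R) (a a' : {ffun 'I_s -> I}) (m : 'I_s) :
  ranked_by x a -> injective a' ->
  \sum_(j : 'I_s | (j <= m)%N) x (a' j) <= \sum_(j : 'I_s | (j <= m)%N) x (a j).
Proof.
case=> ia hmono hcodom ia'.
apply: (sum_le_threshold (c := x (a m))) => // [j|j|i /hcodom//].
  exact: hmono.
by rewrite -ltnNge => /ltnW; apply: hmono.
Qed.

Lemma sum_by_parts (R : realFieldType) (N X : nat -> R) (s : nat) :
  \sum_(j < s) N j * X j =
  \sum_(m < s) (N m - N m.+1) * (\sum_(j < m.+1) X j) + N s * \sum_(j < s) X j.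
Proof.
elim: s => [|s IH]; first by rewrite !big_ord0 mulr0 addr0.
rewrite big_ord_recr /= IH big_ord_recr /= [in RHS]big_ord_recr /=; ring.
Qed.

Lemma ranked_weighted_sum_max (R : realFieldType) (I : finType) (s : nat)
    (n : 'I_s -> R) (x : I -> R) (a a' : {ffun 'I_s -> I}) :
  (forall j k : 'I_s, (j <= k)%N -> n k <= n j) -> (forall j, 0 <= n j) ->
  ranked_by x a -> injective a' ->
  \sum_j n j * x (a' j) <= \sum_j n j * x (a j).
Proof.
move=> n_mono n_ge0 ra ia'.
(* extended by 0 past position s, so the boundary term of sum_by_parts vanishes *)
pose N k := oapp n 0 (insub k : option 'I_s).
pose X (f : {ffun 'I_s -> I}) k := oapp (x \o f) 0 (insub k : option 'I_s).
have NX (f : {ffun 'I_s -> I}) :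
    \sum_j n j * x (f j) = \sum_(j < s) N j * X f j.
  by apply: eq_bigr => j _; rewrite /N /X valK.
have Xprefix (f : {ffun 'I_s -> I}) (m : 'I_s) :
    \sum_(j < m.+1) X f j = \sum_(j : 'I_s | (j <= m)%N) x (f j).
  by rewrite (big_ord_widen _ _ (ltn_ord m)); apply: eq_bigr => j _; rewrite /X valK.
have Ns0 : N s = 0 by rewrite /N insubF ?ltnn.
rewrite !NX !sum_by_parts Ns0 !mul0r !addr0.
apply: ler_sum => m _; apply: ler_wpM2l.
  rewrite subr_ge0 /N valK /=; case: insubP => [k _ km|] //=.
  by apply: n_mono; rewrite km.
by rewrite !Xprefix; apply: ranked_prefix_sum_max.
Qed.

Lemma affine_ge0_between (R : realFieldType) (x1 x2 x u v : R) :
  x1 <= x <= x2 -> 0 <= u - x1 * v -> 0 <= u - x2 * v -> 0 <= u - x * v.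
Proof. by case/andP=> h1 h2; have [v_ge0|v_lt0] := leP 0 v; nra. Qed.

Section Welfare.
Variables (R : realFieldType) (I : finType) (s : nat).
Variables (n : 'I_s -> R) (q b : I -> R) (lam : R).
Hypothesis lam_gt0 : 0 < lam.
Hypothesis n_mono : forall j k : 'I_s, (j <= k)%N -> n k <= n j.
Hypothesis n_ge0 : forall j : 'I_s, 0 <= n j.
Hypothesis q_ge0 : forall i, 0 <= q i.
Hypothesis b_ge0 : forall i, 0 <= b i.

Local Notation Nsum := (Nsum n q b).
Local Notation Dsum := (Dsum n q).
Local Notation welfare := (welfare n q b lam).
Local Notation score := (score q b lam).
Local Notation phi := (phi n q b lam).

Lemma Nsum_ge0 a : 0 <= Nsum a.
Proof. by apply: sumr_ge0 => j _; rewrite !mulr_ge0. Qed.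

Lemma Dsum_ge0 a : 0 <= Dsum a.
Proof. by apply: sumr_ge0 => j _; rewrite mulr_ge0. Qed.

Lemma welfare_denom_gt0 a : 0 < 1 + lam * Dsum a.
Proof. by have := mulr_ge0 (ltW lam_gt0) (Dsum_ge0 a); lra. Qed.

Lemma phiE S a : phi S a = Nsum a - lam * S * Dsum a.
Proof.
rewrite /phi /Nsum /Dsum mulr_sumr -sumrB; apply: eq_bigr => j _; ring.
Qed.

Lemma welfare_ge_phi S a : (S <= welfare a) = (S <= phi S a).
Proof.
by rewrite /welfare ler_pdivlMr ?welfare_denom_gt0 // phiE; apply/idP/idP; lra.
Qed.

Lemma welfare_le_phi S a : (welfare a <= S) = (phi S a <= S).
Proof.
by rewrite /welfare ler_pdivrMr ?welfare_denom_gt0 // phiE; apply/idP/idP; lra.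
Qed.

Lemma welfare_le_Nsum a : welfare a <= Nsum a.
Proof.
rewrite /welfare ler_pdivrMr ?welfare_denom_gt0 //.
by have := mulr_ge0 (Nsum_ge0 a) (mulr_ge0 (ltW lam_gt0) (Dsum_ge0 a)); lra.
Qed.

Lemma phi_ranked_max S (a a' : {ffun 'I_s -> I}) :
  ranked_by (score S) a -> injective a' -> phi S a' <= phi S a.
Proof. exact: ranked_weighted_sum_max. Qed.

Lemma Nsum_ranked_max (a a' : {ffun 'I_s -> I}) :
  ranked_by (fun i => b i * q i) a -> injective a' -> Nsum a' <= Nsum a.
Proof.
move=> ra ia'; rewrite /Nsum.
under eq_bigr do rewrite -mulrA.
under [X in _ <= X]eq_bigr do rewrite -mulrA.
exact: ranked_weighted_sum_max ra ia'.
Qed.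

Lemma welfare_max_of_bracket (SL SH : R) (A a0 : {ffun 'I_s -> I}) :
  ranked_by (score SL) A -> ranked_by (score SH) A ->
  injective a0 -> SL <= welfare a0 ->
  (forall a : {ffun 'I_s -> I}, injective a -> welfare a <= SH) ->
  forall A' : {ffun 'I_s -> I}, injective A' -> welfare A' <= welfare A.
Proof.
move=> rL rH ia0 SL_le SH_ge A' iA'.
have phiA_SL : SL <= phi SL A.
  by rewrite welfare_ge_phi in SL_le; apply: le_trans SL_le (phi_ranked_max rL ia0).
set S' := welfare A'.
have [S'_lt|SL_le'] := ltP S' SL.
  by apply/ltW/(lt_le_trans S'_lt); rewrite welfare_ge_phi.
have phiA'_S' : phi S' A' = S'.
  by apply/eqP; rewrite eq_le -welfare_le_phi -welfare_ge_phi lexx.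
rewrite welfare_ge_phi -{1}phiA'_S' -subr_ge0.
have gap S : phi S A - phi S A' = (Nsum A - Nsum A') - S * (lam * (Dsum A - Dsum A')).
  by rewrite !phiE; ring.
rewrite gap; apply: (affine_ge0_between (x1 := SL) (x2 := SH)).
- by rewrite SL_le' SH_ge.
- by rewrite -gap subr_ge0 phi_ranked_max.
- by rewrite -gap subr_ge0 phi_ranked_max.
Qed.

Section Bisection.
Variables (k : nat) (A0 : {ffun 'I_s -> I}) (SL SH : nat -> R).
Variable AM : nat -> {ffun 'I_s -> I}.
Hypothesis A0_ranked : ranked_by (fun i => b i * q i) A0.
Hypothesis SL0 : SL 0%N = welfare A0.
Hypothesis SH0 : SH 0%N = Nsum A0.
Hypothesis bisect : forall t, (t < k)%N ->
  let Sh := (SL t + SH t) / 2 in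
  ranked_by (score Sh) (AM t) /\
  (if phi Sh (AM t) < Sh then SL t.+1 = SL t /\ SH t.+1 = Sh
   else SL t.+1 = Sh /\ SH t.+1 = SH t).

Lemma bisection_lower t : (t <= k)%N ->
  exists2 a : {ffun 'I_s -> I}, injective a & SL t <= welfare a.
Proof.
elim: t => [_|t IH t_lt]; first by exists A0; [case: A0_ranked | rewrite SL0].
have [a ia SLa] := IH (ltnW t_lt).
have [rM] := bisect t_lt; case: ifP => phi_lt [-> _]; first by exists a.
by exists (AM t); [case: rM | rewrite welfare_ge_phi leNgt phi_lt].
Qed.

Lemma bisection_upper t : (t <= k)%N ->
  forall a : {ffun 'I_s -> I}, injective a -> welfare a <= SH t.
Proof.
elim: t => [_ a ia|t IH t_lt a ia].
  by rewrite SH0; apply: le_trans (welfare_le_Nsum a) (Nsum_ranked_max _ _).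
have [rM] := bisect t_lt; case: ifP => phi_lt [_ ->]; last exact: IH (ltnW t_lt) a ia.
by rewrite welfare_le_phi; apply/ltW/(le_lt_trans _ phi_lt)/phi_ranked_max.
Qed.

End Bisection.
End Welfare.

Theorem theorem3 (R : realFieldType) (I : finType) (s : nat)
    (n : 'I_s -> R) (q b : I -> R) (lam : R)
    (hlam : 0 < lam)
    (hn_mono : forall j k : 'I_s, (j <= k)%N -> n k <= n j)
    (hn_ge0 : forall j : 'I_s, 0 <= n j)
    (hq : forall i, 0 <= q i)
    (hb : forall i, 0 <= b i)
    (A : {ffun 'I_s -> I}) :
  alg_output n q b lam A ->
  is_alloc A /\
  (forall A' : {ffun 'I_s -> I}, is_alloc A' ->
     welfare n q b lam A' <= welfare n q b lam A).
Proof.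
case=> k [A0 [SL [SH [AL [AH [AM [[rA0 SL0 SH0] [ranked [step [ALH ->]]]]]]]]]].
have [rL rH] := ranked k (leqnn k); rewrite -ALH in rH.
have bisect t : (t < k)%N -> let Sh := (SL t + SH t) / 2 in
    ranked_by (score q b lam Sh) (AM t) /\
    (if phi n q b lam Sh (AM t) < Sh then SL t.+1 = SL t /\ SH t.+1 = Sh
     else SL t.+1 = Sh /\ SH t.+1 = SH t).
  by move=> /step [].
have [a0 ia0 SL_le] := bisection_lower hlam hn_ge0 hq rA0 SL0 bisect (leqnn k).
split; first by case: rL.
exact: welfare_max_of_bracket rL rH ia0 SL_le
  (bisection_upper hlam hn_mono hn_ge0 hq hb rA0 SH0 bisect (leqnn k)).
Qed.
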